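(* Let $A$ be a cyclic Leibniz algebra generated by $a$, with notation as in the context. Then $A$ has a unique maximal ideal, namely $M_1=\{b\in A: t(L_a)(b)=0\}$, where $t(x)=p(x)/p_1(x)$.
   Context: A (left) Leibniz algebra is an algebra satisfying $x(yz)=(xy)z+y(xz)$ for all $x,y,z$; all algebras are finite-dimensional over a field $F$. $A$ is a cyclic Leibniz algebra generated by $a$: $A$ is generated as an algebra by the single element $a$, and with $a^1=a$, $a^{k+1}=aa^k$, the elements $a,a^2,\dots,a^n$ form a basis of $A$. Write $aa^n=\alpha_2a^2+\cdots+\alpha_na^n$. $L_a:A\to A$ is $b\mapsto ab$, with characteristic (and minimal) polynomial $p(x)=x^n-\alpha_nx^{n-1}-\cdots-\alpha_2x=p_1(x)^{n_1}\cdots p_s(x)^{n_s}$, the $p_j$ distinct monic irreducibles over $F$, $p_1(x)=x$. An ideal is a subspace $I$ with $AI\subseteq I$ and $IA\subseteq I$; a maximal ideal is a proper ideal not properly contained in any proper ideal. *)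

From HB Require Import structures.
From mathcomp Require Import all_boot all_order all_algebra.
Set Implicit Arguments. Unset Strict Implicit. Unset Printing Implicit Defensive.
Import GRing.Theory.
Local Open Scope ring_scope.

Section LeibnizDefs.
Variables (F : fieldType) (V : vectType F) (mul : V -> V -> V).

Definition bilinear_mul : Prop :=
  (forall x c u v, mul x (c *: u + v) = c *: mul x u + mul x v) /\
  (forall y c u v, mul (c *: u + v) y = c *: mul u y + mul v y).

Definition left_leibniz : Prop :=
  forall x y z, mul x (mul y z) = mul (mul x y) z + mul y (mul x z).

(* lpow a k = a^(k+1), with a^1 = a and a^(k+1) = a a^k *)
Fixpoint lpow (a : V) (k : nat) : V :=
  if k is k'.+1 then mul a (lpow a k') else a.

Definition cyclic_basis (a : V) : Prop :=
  basis_of fullv (mkseq (lpow a) (\dim {:V})).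

Definition La (a : V) : 'End(V) := linfun (mul a).

Definition charLa (a : V) : {poly F} :=
  char_poly (passmx.mxof (vbasis fullv) (vbasis fullv) (La a)).

Definition poly_La (q : {poly F}) (a b : V) : V :=
  \sum_(i < size q) q`_i *: iter i (mul a) b.

Definition is_ideal (I : {vspace V}) : Prop :=
  forall x y, y \in I -> mul x y \in I /\ mul y x \in I.

Definition is_maximal_ideal (I : {vspace V}) : Prop :=
  [/\ is_ideal I, I != fullv &
      forall J : {vspace V}, is_ideal J -> (I <= J)%VS -> J != fullv -> J = I].

End LeibnizDefs.

From HB Require Import structures.
From mathcomp Require Import all_boot all_order all_algebra.
Import GRing.Theory.
Local Open Scope ring_scope.
Import passmx.

(* Let A be a cyclic Leibniz algebra with basis a, a^2, ..., a^(n+1) and let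
   M1 be the span of a^2, ..., a^(n+1).  The proof has two halves.

   The Leibniz identity gives (a a) z = 0 and, inductively,
   a^(k+1) z = 0 for k >= 1, so M1 annihilates A from the left.  Writing
   every x as c a + h with h in M1, this yields x y = c (a y) in M1 (using
   also that a^(n+2) lies in M1), so M1 contains all products and is a
   proper ideal.  Conversely an ideal containing some c a + h with c != 0
   contains every a z, hence M1, hence a: it is the whole algebra.

   By Cayley-Hamilton p(L_a) = 0; evaluating at a shows
   p has no constant term, so p(x) = x t(x) and t(L_a) kills the image of
   L_a, which contains M1.  Finally t(L_a)(a) = a^(n+1) + lower powers is
   nonzero, so t(L_a)(c a + h) = c t(L_a)(a) vanishes only when c = 0. *)

Lemma char_poly_coef_sum (F : fieldType) (m : nat) (A : 'M[F]_m) :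
  \sum_(i < size (char_poly A)) (char_poly A)`_i *: A ^+ i = 0.
Proof.
case: m A => [|m] A; first by apply/matrixP => [[]].
have := Cayley_Hamilton A.
rewrite /horner_mx /horner_morph (@horner_coef_wide _ (size (char_poly A))) => [CH|].
  apply: etrans CH; apply: eq_bigr => i _.
  by rewrite coef_map /= [_ * _]mul_scalar_mx.
by rewrite map_polyE; apply: leq_trans (size_Poly _) _; rewrite size_map.
Qed.

Lemma span_ind (F : fieldType) (V : vectType F) (P : V -> Prop) (X : seq V) :
  P 0 -> (forall c u v, P u -> P v -> P (c *: u + v)) ->
  (forall x, x \in X -> P x) -> forall v, v \in <<X>>%VS -> P v.
Proof.
move=> P0 PS PX v /(@coord_span _ _ _ (in_tuple X)) ->.
elim/big_rec: _ => // i w _ Pw; apply: PS => //; apply: PX; exact: mem_nth.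
Qed.

Section BilinearProduct.
Variables (F : fieldType) (V : vectType F) (mul : V -> V -> V).
Hypothesis mul_bilinear : bilinear_mul mul.

Lemma mulDZr x c u v : mul x (c *: u + v) = c *: mul x u + mul x v.
Proof. exact: mul_bilinear.1. Qed.

Lemma mulDZl y c u v : mul (c *: u + v) y = c *: mul u y + mul v y.
Proof. exact: mul_bilinear.2. Qed.

Lemma mulx0 x : mul x 0 = 0.
Proof.
have h := mulDZr x 1 0 0; rewrite !scale1r addr0 in h.
by apply: (@addrI _ (mul x 0)); rewrite addr0 -h.
Qed.

Lemma mul0x y : mul 0 y = 0.
Proof.
have h := mulDZl y 1 0 0; rewrite !scale1r addr0 in h.
by apply: (@addrI _ (mul 0 y)); rewrite addr0 -h.
Qed.

Lemma La_apply a w : La mul a w = mul a w.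
Proof.
have linA : linear (mul a) by move=> c u w'; exact: mulDZr.
pose fa : {linear V -> V} := HB.pack (mul a)
  (GRing.isSemilinear.Build F V V _ (mul a) (GRing.semilinear_linear linA)).
exact: (lfunE fa w).
Qed.

Lemma iter_mul_a a i : iter i (mul a) a = lpow mul a i.
Proof. by elim: i => //= i ->. Qed.

Lemma iter_mul_linear a i c u v :
  iter i (mul a) (c *: u + v) = c *: iter i (mul a) u + iter i (mul a) v.
Proof. by elim: i => //= i ->; rewrite mulDZr. Qed.

Lemma poly_La_linear q a c u v :
  poly_La mul q a (c *: u + v) = c *: poly_La mul q a u + poly_La mul q a v.
Proof.
rewrite /poly_La scaler_sumr -big_split /=; apply: eq_bigr => i _.
by rewrite iter_mul_linear scalerDr !scalerA mulrC.
Qed.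

Lemma poly_La_widen (q : {poly F}) a b m : (size q <= m)%N ->
  poly_La mul q a b = \sum_(i < m) q`_i *: iter i (mul a) b.
Proof.
move=> le_qm; rewrite /poly_La (big_ord_widen _ (fun i => q`_i *: iter i (mul a) b) le_qm).
rewrite big_mkcond; apply: eq_bigr => i _; case: ifP => // /negbT.
by rewrite -leqNgt => hi; rewrite nth_default // scale0r.
Qed.

Lemma poly_La_charLa a v : poly_La mul (charLa mul a) a v = 0.
Proof.
pose e := vbasis (fullv : {vspace V}).
have e_basis : basis_of fullv e := vbasisP fullv.
pose M := mxof e e (La mul a).
have rVof_iter i w : rVof e (iter i (mul a) w) = rVof e w *m M ^+ i.
  elim: i => [|i IH] /=; first by rewrite expr0 mulmx1.
  rewrite -La_apply (rVof_app _ e_basis) IH exprSr; exact: esym (mulmxA _ _ _).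
apply/eqP; rewrite -(rVof_eq0 e_basis) /poly_La linear_sum /=.
rewrite (eq_bigr (fun i : 'I__ => rVof e v *m ((charLa mul a)`_i *: M ^+ i))).
  by rewrite -mulmx_sumr char_poly_coef_sum mulmx0.
by move=> i _; rewrite linearZ /= rVof_iter scalemxAr.
Qed.

Section Leibniz.
Hypothesis mul_leibniz : left_leibniz mul.

Lemma mul_lpowS_eq0 a k z : mul (lpow mul a k.+1) z = 0.
Proof.
elim: k z => [|k IH] z /=.
  have h := mul_leibniz a a z.
  by apply: (@addIr _ (mul a (mul a z))); rewrite add0r -h.
have := mul_leibniz a (lpow mul a k.+1) z; rewrite !IH addr0 => <-.
exact: mulx0.
Qed.

Section Cyclic.
Variables (a : V) (n : nat).
Hypothesis a_basis : basis_of fullv (a :: map (lpow mul a) (iota 1 n)).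

(* The candidate maximal ideal M1 = span (a^2, ..., a^(n+1)). *)
Local Notation M1 := (<<map (lpow mul a) (iota 1 n)>>%VS).

Lemma span_cyclic_basis : (<<a :: map (lpow mul a) (iota 1 n)>> = fullv)%VS.
Proof. by case/andP: a_basis => /eqP. Qed.

Lemma a_notin_M1 : a \notin M1.
Proof. by case/andP: a_basis => _; rewrite free_cons => /andP[]. Qed.

Lemma scale_a_in_M1 c : c *: a \in M1 -> c = 0.
Proof.
move=> caM; apply/eqP; apply: contraT => c_neq0; case/negP: a_notin_M1.
by rewrite -[X in X \in _](scalerK c_neq0) memvZ.
Qed.

Lemma decomp_a_M1 v : exists c h, h \in M1 /\ v = c *: a + h.
Proof.
have : v \in <<a :: map (lpow mul a) (iota 1 n)>>%VS by rewrite span_cyclic_basis memvf.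
by rewrite span_cons => /memv_addP[u /vlineP[c ->] [h hM ->]]; exists c, h.
Qed.

Lemma M1_left_annihilates h z : h \in M1 -> mul h z = 0.
Proof.
move=> hM; move: h hM z; apply: span_ind.
- exact: mul0x.
- by move=> c u v Pu Pv z; rewrite mulDZl Pu Pv scaler0 addr0.
- move=> x /mapP[[|k]]; rewrite mem_iota // => _ -> z.
  exact: mul_lpowS_eq0.
Qed.

(* The next power a^(n+2) falls back into M1: if a^(n+2) = c a + h then
   0 = a^(n+2) a^(n+1) = c a^(n+2), so c = 0 or a^(n+2) = 0. *)
Lemma lpow_top_in_M1 : lpow mul a n.+1 \in M1.
Proof.
have [c [h [hM e]]] := decomp_a_M1 (lpow mul a n.+1).
have c_top : c *: lpow mul a n.+1 = 0.
  have := mul_lpowS_eq0 a n (lpow mul a n).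
  by rewrite {1}e mulDZl (M1_left_annihilates _ _ hM) addr0.
have [c0|c_neq0] := eqVneq c 0; first by rewrite e c0 scale0r add0r.
move/eqP: c_top; rewrite scaler_eq0 (negPf c_neq0) /= => /eqP top0.
have ca : c *: a = - h by apply/eqP; rewrite -subr_eq0 opprK -e; exact/eqP.
by have := scale_a_in_M1 c; rewrite ca memvN => /(_ hM) c0; rewrite c0 eqxx in c_neq0.
Qed.

Lemma lpow_in_M1 k : (0 < k <= n.+1)%N -> lpow mul a k \in M1.
Proof.
case/andP=> k_gt0; rewrite leq_eqVlt => /orP[/eqP->|k_lt]; first exact: lpow_top_in_M1.
by apply/memv_span/map_f; rewrite mem_iota k_gt0 add1n.
Qed.

Lemma mul_a_in_M1 y : mul a y \in M1.
Proof.
have [c [h [hM ->]]] := decomp_a_M1 y.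
rewrite mulDZr memvD ?memvZ ?(lpow_in_M1 1) //.
move: h hM; apply: span_ind.
- by rewrite mulx0 mem0v.
- by move=> c' u v Pu Pv; rewrite mulDZr memvD // memvZ.
- move=> x /mapP[k]; rewrite mem_iota add1n => /andP[k_gt0 k_lt] ->.
  by apply: (lpow_in_M1 k.+1); rewrite ltnS k_lt.
Qed.

Lemma mul_in_M1 x y : mul x y \in M1.
Proof.
have [c [h [hM ->]]] := decomp_a_M1 x.
by rewrite mulDZl (M1_left_annihilates _ _ hM) addr0 memvZ // mul_a_in_M1.
Qed.

Lemma M1_ideal : is_ideal mul M1.
Proof. by move=> x y _; rewrite !mul_in_M1. Qed.

Lemma M1_proper : M1 != fullv.
Proof. by apply/eqP => M1_full; have := a_notin_M1; rewrite M1_full memvf. Qed.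

(* An ideal not contained in M1 contains some c a + h with c != 0; it then
   contains a z = c^-1 ((c a + h) z) for all z, hence M1 and a. *)
Lemma proper_ideal_sub_M1 (I : {vspace V}) :
  is_ideal mul I -> I != fullv -> (I <= M1)%VS.
Proof.
move=> I_ideal I_proper; apply/subvP => y yI.
have [c [h [hM e]]] := decomp_a_M1 y.
have [c0|c_neq0] := eqVneq c 0; first by rewrite e c0 scale0r add0r.
case/negP: I_proper; rewrite eqEsubv subvf /=.
have mul_a_in_I z : mul a z \in I.
  have := (I_ideal z y yI).2; rewrite e mulDZl (M1_left_annihilates _ _ hM) addr0.
  by move=> /(memvZ c^-1); rewrite scalerK.
have M1_sub_I : (M1 <= I)%VS.
  by apply/span_subvP => x /mapP[[|k]]; rewrite mem_iota // => _ ->; exact: mul_a_in_I.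
have aI : a \in I.
  have : c *: a \in I by rewrite -[c *: a](addrK h) -e memvB // (subvP M1_sub_I).
  by move=> /(memvZ c^-1); rewrite scalerK.
rewrite -span_cyclic_basis; apply/span_subvP => x; rewrite inE => /orP[/eqP->//|xS].
exact/(subvP M1_sub_I)/memv_span.
Qed.

Lemma M1_maximal : is_maximal_ideal mul M1.
Proof.
split; [exact: M1_ideal | exact: M1_proper |].
move=> J J_ideal M1_sub_J J_proper; apply/eqP.
by rewrite eqEsubv M1_sub_J andbT proper_ideal_sub_M1.
Qed.

Lemma M1_unique (I : {vspace V}) : is_maximal_ideal mul I -> I = M1.
Proof.
case=> I_ideal I_proper I_max; apply/esym/I_max.
- exact: M1_ideal.
- exact: proper_ideal_sub_M1.
- exact: M1_proper.
Qed.

Hypothesis dimV : \dim {:V} = n.+1.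

Local Notation p := (charLa mul a).
Local Notation t := (charLa mul a %/ 'X).

Lemma size_charLa : size p = n.+2.
Proof. by rewrite /charLa size_char_poly dimV. Qed.

Lemma charLa_lead : p`_n.+1 = 1.
Proof.
have /monicP := char_poly_monic (mxof (vbasis fullv) (vbasis fullv) (La mul a)).
by rewrite -/(charLa mul a) /lead_coef size_charLa.
Qed.

(* p(L_a)(a) = p_0 a + (element of M1) = 0 forces p_0 = 0. *)
Lemma charLa_coef0 : p`_0 = 0.
Proof.
have := poly_La_charLa a a.
rewrite (poly_La_widen _ _ _ n.+2) ?size_charLa // big_ord_recl /= => /eqP.
rewrite addr_eq0 => /eqP p0a; apply: scale_a_in_M1; rewrite p0a memvN.
apply: memv_suml => i _; apply: memvZ.
by rewrite iter_mul_a add0n; apply: (lpow_in_M1 i.+1); rewrite ltnS ltn_ord.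
Qed.

Lemma coef_t i : t`_i = p`_i.+1.
Proof.
by rewrite -[X in _ %/ X]expr1 -Pdiv.IdomainMonic.drop_poly_divp coef_drop_poly addn1.
Qed.

Lemma size_t : (size t <= n.+1)%N.
Proof.
by rewrite -[X in _ %/ X]expr1 -Pdiv.IdomainMonic.drop_poly_divp size_drop_poly size_charLa.
Qed.

(* t(L_a) L_a = p(L_a) = 0, since p has no constant term. *)
Lemma t_kills_image c : poly_La mul t a (mul a c) = 0.
Proof.
rewrite (poly_La_widen _ _ _ _ size_t).
have := poly_La_charLa a c.
rewrite (poly_La_widen _ _ _ n.+2) ?size_charLa //.
rewrite big_ord_recl charLa_coef0 scale0r add0r => CH; apply: etrans CH.
by apply: eq_bigr => i _; rewrite coef_t lift0 -iterSr.
Qed.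

Lemma t_kills_M1 b : b \in M1 -> poly_La mul t a b = 0.
Proof.
move=> bM; have : b \in limg (La mul a).
  move: b bM; apply/subvP/span_subvP => x /mapP[[|k]]; rewrite mem_iota // => _ ->.
  by rewrite /= -La_apply memv_img ?memvf.
by case/memv_imgP => c _ ->; rewrite La_apply t_kills_image.
Qed.

(* t(L_a)(a) = sum_i t_i a^(i+1) has coefficient t_n = p_(n+1) = 1 on a^(n+1). *)
Lemma t_a_neq0 : poly_La mul t a a != 0.
Proof.
have sz : size (mkseq (lpow mul a) n.+1) == n.+1 by rewrite size_mkseq.
have free_pows : free (Tuple sz) := (andP a_basis).2.
rewrite (poly_La_widen _ _ _ _ size_t); apply/eqP => t_a0.
have := coord_sum_free (fun i : 'I_n.+1 => t`_i) ord_max free_pows.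
rewrite (eq_bigr (fun i : 'I_n.+1 => t`_i *: iter i (mul a) a)); last first.
  by move=> i _; rewrite iter_mul_a /= nth_mkseq.
by rewrite t_a0 linear0 /= coef_t charLa_lead => /eqP; rewrite eq_sym oner_eq0.
Qed.

Lemma M1_kernel_t b : b \in M1 <-> poly_La mul t a b = 0.
Proof.
split; first exact: t_kills_M1.
have [c [h [hM ->]]] := decomp_a_M1 b.
rewrite poly_La_linear (t_kills_M1 _ hM) addr0 => /eqP.
by rewrite scaler_eq0 (negPf t_a_neq0) orbF => /eqP->; rewrite scale0r add0r.
Qed.

End Cyclic.
End Leibniz.
End BilinearProduct.

Theorem mainTheorem14 (F : fieldType) (V : vectType F) (mul : V -> V -> V)
    (a : V) :
  bilinear_mul mul -> left_leibniz mul ->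
  (0 < \dim {:V})%N -> cyclic_basis mul a ->
  let t := charLa mul a %/ 'X in
  exists M1 : {vspace V},
    (forall b, b \in M1 <-> poly_La mul t a b = 0) /\
    is_maximal_ideal mul M1 /\
    (forall I : {vspace V}, is_maximal_ideal mul I -> I = M1).
Proof.
move=> bil leib dim_gt0 a_basis t; rewrite /cyclic_basis in a_basis.
case dimV: (\dim {:V}) dim_gt0 a_basis => [//|n] _ a_basis.
exists <<map (lpow mul a) (iota 1 n)>>%VS; split; [|split].
- by move=> b; apply: M1_kernel_t.
- exact: M1_maximal.
- by move=> I; apply: M1_unique.
Qed.
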